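(* Let $G$ be a simple graph. The spectrum of the adjacency matrix of the triangular signed graph $G_{\vartriangle}$ does not depend on the chosen orientation of $G$ (of its edges and triangles).
   Context: Each edge of $G$ is oriented and each triangle $\vartriangle$ of $G$ is given a cyclic orientation; for an edge $e$ of $\vartriangle$ write $e\in\vartriangle^+$ if the orientation of $e$ agrees with that of $\vartriangle$ and $e\in\vartriangle^-$ otherwise. The triangular signed graph $G_{\vartriangle}$ has the triangles of $G$ as vertices; two distinct triangles $\vartriangle_1,\vartriangle_2$ sharing an edge $e$ are joined by a positive edge if $e\in\vartriangle_1^+\cap\vartriangle_2^+$ or $e\in\vartriangle_1^-\cap\vartriangle_2^-$, and by a negative edge otherwise; triangles sharing no edge are non-adjacent. Its adjacency matrix has entry $1$ for positive edges, $-1$ for negative edges and $0$ elsewhere. *)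

From mathcomp Require Import all_boot all_order all_algebra.
Set Implicit Arguments. Unset Strict Implicit. Unset Printing Implicit Defensive.
Import Order.TTheory GRing.Theory Num.Theory.
Local Open Scope ring_scope.

Section TriangularSignedGraph.
Variables (V : finType) (e : rel V).

Definition is_triangle (T : {set V}) : bool :=
  (#|T| == 3)%N && [forall u in T, forall v in T, (u != v) ==> e u v].

Definition triangles : {set {set V}} := [set T | is_triangle T].

(* edge orientation: o u v means the edge {u,v} is oriented u -> v *)
Definition edge_orientation (o : rel V) : Prop :=
  forall u v, e u v -> o u v != o v u.

(* cyclic orientation of each triangle: ct T u v means u -> v follows the
   cyclic orientation of T *)
Definition triangle_orientation (ct : {set V} -> rel V) : Prop :=
  forall T, T \in triangles ->
    (forall u v, u \in T -> v \in T -> u != v -> ct T u v != ct T v u) /\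
    (forall u v w, u \in T -> v \in T -> w \in T ->
       u != v -> v != w -> w != u -> ct T u v -> ct T v w -> ct T w u).

(* the oriented edge u -> v belongs to T^+ (agrees with T's orientation) *)
Definition in_plus (o : rel V) (ct : {set V} -> rel V) (T : {set V}) (u v : V)
  : bool := o u v == ct T u v.

Definition tri_sign (R : numDomainType) (o : rel V) (ct : {set V} -> rel V)
  (T1 T2 : {set V}) : R :=
  if (T1 != T2) && (#|T1 :&: T2| == 2)%N then
    (if [exists u, exists v, [&& u \in T1 :&: T2, v \in T1 :&: T2, u != v,
            o u v & in_plus o ct T1 u v == in_plus o ct T2 u v]]
     then 1 else -1)
  else 0.

Definition tri_adj (R : numDomainType) (o : rel V) (ct : {set V} -> rel V)
  : 'M[R]_#|triangles| :=
  \matrix_(i, j) tri_sign R o ct (enum_val i) (enum_val j).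

End TriangularSignedGraph.

(* Two cyclic orientations of a triangle T either agree on every ordered pair
   of distinct vertices of T or on none, so they differ by a sign s(T) = +-1.
   The sign of the edge joining two triangles sharing the edge {a, b} only
   records whether both triangles orient (a, b) alike, whatever the orientation
   of {a, b} itself.  Hence reorienting multiplies the adjacency matrix on both
   sides by the involution diag(s(T)), a similarity, which preserves the
   characteristic polynomial. *)

From mathcomp Require Import all_boot all_order all_algebra.
Import GRing.Theory.
Set Implicit Arguments.
Unset Strict Implicit.

Local Open Scope ring_scope.

Section CyclicOrientation.
Variables (V : finType) (T : {set V}).

Definition cyclic_on (c : rel V) : Prop :=
  (forall u v, u \in T -> v \in T -> u != v -> c u v != c v u) /\
  (forall u v w, u \in T -> v \in T -> w \in T ->
     u != v -> v != w -> w != u -> c u v -> c v w -> c w u).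

Section OneOrientation.
Variables (c : rel V) (hc : cyclic_on c).

Lemma cyclic_on_flip u v : u \in T -> v \in T -> u != v -> c v u = ~~ c u v.
Proof. by move=> uT vT uv; have := hc.1 u v uT vT uv; case: (c u v); case: (c v u). Qed.

Lemma cyclic_on_next u v w : u \in T -> v \in T -> w \in T ->
  u != v -> v != w -> w != u -> c u v -> c v w.
Proof.
move=> uT vT wT uv vw wu cuv; apply/negbNE/negP => ncvw.
have cwv : c w v by rewrite cyclic_on_flip // ?(negbTE ncvw) // eq_sym.
case cwu: (c w u).
  by move: ncvw; rewrite (hc.2 w u v) // eq_sym.
have cuw : c u w by rewrite -[c u w]negbK -cyclic_on_flip // ?cwu // eq_sym.
have cvu : c v u by apply: (hc.2 u w v); rewrite // eq_sym.
by move: cuv; rewrite -[c u v]negbK -cyclic_on_flip // cvu.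
Qed.

Lemma cyclic_on_rot u v w : u \in T -> v \in T -> w \in T ->
  u != v -> v != w -> w != u -> c u v = c v w.
Proof.
move=> uT vT wT uv vw wu; apply/idP/idP; first exact: cyclic_on_next.
by move=> /(cyclic_on_next vT wT uT vw wu uv); apply: cyclic_on_next.
Qed.

End OneOrientation.

Lemma set2_meet (u v x y : V) : #|T| = 3 -> u \in T -> v \in T -> x \in T -> y \in T ->
  u != v -> x != y -> (x \in [set u; v]) || (y \in [set u; v]).
Proof.
move=> T3 uT vT xT yT uv xy; apply/negPn/negP => /norP [xuv yuv].
have uvT : [set u; v] \subset T by apply/subsetP => z /set2P [] ->.
have /card_le1_eqP /(_ x y) : (#|T :\: [set u; v]| <= 1)%N.
  by rewrite cardsDS // T3 cards2 uv.
rewrite !in_setD xuv yuv xT yT => /(_ isT isT) exy.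
by rewrite exy eqxx in xy.
Qed.

Definition agree_on (c1 c2 : rel V) : bool :=
  [forall u in T, forall v in T, (u != v) ==> (c1 u v == c2 u v)].

Variables (c1 c2 : rel V) (hc1 : cyclic_on c1) (hc2 : cyclic_on c2).

Let agree_at u v := c1 u v == c2 u v.

Lemma agree_atC u v : u \in T -> v \in T -> u != v -> agree_at v u = agree_at u v.
Proof.
move=> uT vT uv; rewrite /agree_at (cyclic_on_flip hc1 uT vT uv).
by rewrite (cyclic_on_flip hc2 uT vT uv); case: (c1 u v); case: (c2 u v).
Qed.

Lemma agree_at_share u v w : u \in T -> v \in T -> w \in T ->
  u != v -> u != w -> agree_at u w = agree_at u v.
Proof.
move=> uT vT wT uv uw; have [-> // | vw] := eqVneq v w.
rewrite -[agree_at u v]agree_atC // /agree_at.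
by rewrite (cyclic_on_rot hc1 vT uT wT) ?(cyclic_on_rot hc2 vT uT wT) // eq_sym.
Qed.

Hypothesis T3 : #|T| = 3.

Lemma agree_onE u v : u \in T -> v \in T -> u != v ->
  (c1 u v == c2 u v) = agree_on c1 c2.
Proof.
move=> uT vT uv; apply/idP/forall_inP => [huv x xT | /(_ u uT) /forall_inP /(_ v vT)];
  last by rewrite uv.
apply/forall_inP => y yT; apply/implyP => xy.
suff : agree_at x y = agree_at u v by rewrite /agree_at => ->.
have vu : v != u by rewrite eq_sym.
case/orP: (set2_meet T3 uT vT xT yT uv xy) => /set2P [] exy; rewrite exy in xy *.
- exact: agree_at_share.
- by rewrite (agree_at_share vT uT yT vu xy) agree_atC.
- have ux : u != x by rewrite eq_sym.
  by rewrite (agree_atC uT xT ux) (agree_at_share uT vT xT uv ux).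
- have vx : v != x by rewrite eq_sym.
  by rewrite (agree_atC vT xT vx) (agree_at_share vT uT xT vu vx) agree_atC.
Qed.

End CyclicOrientation.

Section TriangleSigns.
Variables (V : finType) (e : rel V).

Lemma triangleP T : T \in triangles e ->
  #|T| = 3 /\ {in T &, forall u v, u != v -> e u v}.
Proof.
rewrite inE => /andP [/eqP T3 /forall_inP he]; split=> // u v uT vT uv.
by have /forall_inP /(_ v vT) := he u uT; rewrite uv.
Qed.

Variables (o : rel V) (ct : {set V} -> rel V).
Hypotheses (ho : edge_orientation e o) (hct : triangle_orientation e ct).

Lemma tri_sign_shared_edge (R : numDomainType) T1 T2 a b :
  T1 \in triangles e -> T2 \in triangles e -> T1 != T2 ->
  a != b -> T1 :&: T2 = [set a; b] ->
  tri_sign R o ct T1 T2 = if ct T1 a b == ct T2 a b then 1 else -1.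
Proof.
move=> hT1 hT2 T12 ab hI.
have /setIP [aT1 aT2] : a \in T1 :&: T2 by rewrite hI set21.
have /setIP [bT1 bT2] : b \in T1 :&: T2 by rewrite hI set22.
have agree_ba : (ct T1 b a == ct T2 b a) = (ct T1 a b == ct T2 a b).
  rewrite (cyclic_on_flip (hct hT1)) // (cyclic_on_flip (hct hT2)) //.
  by case: (ct T1 a b); case: (ct T2 a b).
rewrite /tri_sign T12 hI cards2 ab /=; congr (if _ then _ else _).
apply/existsP/idP => [[u /existsP [v]] | agree_ab].
  rewrite /in_plus !inE => /and5P [/orP [] /eqP -> /orP [] /eqP -> uv ouv];
    rewrite ?eqxx // in uv; by rewrite ouv ?agree_ba.
have /triangleP [_ eT1] := hT1.
have := ho (eT1 a b aT1 bT1 ab); case oab: (o a b) => /= oba.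
  by exists a; apply/existsP; exists b; rewrite /in_plus oab !inE !eqxx orbT ab.
have {}oba : o b a by case: (o b a) oba.
exists b; apply/existsP; exists a.
by rewrite /in_plus oba !inE !eqxx orbT (eq_sym b) ab /= agree_ba.
Qed.

End TriangleSigns.

Lemma char_poly_conj (R : comNzRingType) n (A P Q : 'M[R]_n) :
  Q *m P = 1%:M -> char_poly (Q *m A *m P) = char_poly A.
Proof.
move=> QP; have PQ := mulmx1C QP; rewrite /char_poly /char_poly_mx.
have mapC1 (B C : 'M[R]_n) : B *m C = 1%:M -> map_mx polyC B *m map_mx polyC C = 1%:M.
  by move=> BC; rewrite -map_mxM BC map_scalar_mx /= polyC1.
have -> : 'X%:M - map_mx polyC (Q *m A *m P) =
          map_mx polyC Q *m ('X%:M - map_mx polyC A) *m map_mx polyC P.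
  by rewrite !map_mxM mulmxBr mulmxBl scalar_mxC -['X%:M *m _ *m _]mulmxA (mapC1 _ _ QP) mulmx1.
by rewrite !det_mulmx mulrC mulrA -det_mulmx (mapC1 _ _ PQ) det1 mul1r.
Qed.

Lemma diag_mx_involutive (R : pzSemiRingType) n (d : 'rV[R]_n) :
  (forall i, d 0 i * d 0 i = 1) -> diag_mx d *m diag_mx d = 1%:M.
Proof.
move=> dd; rewrite mulmx_diag -diag_const_mx; congr diag_mx.
by apply/rowP => i; rewrite !mxE.
Qed.

Section Switching.
Variables (R : numDomainType) (V : finType) (e : rel V).
Variables (o1 o2 : rel V) (ct1 ct2 : {set V} -> rel V).
Hypotheses (ho1 : edge_orientation e o1) (ho2 : edge_orientation e o2).
Hypotheses (hct1 : triangle_orientation e ct1) (hct2 : triangle_orientation e ct2).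

Definition switching_sign (T : {set V}) : R :=
  if agree_on T (ct1 T) (ct2 T) then 1 else -1.

Lemma tri_sign_switch T1 T2 : T1 \in triangles e -> T2 \in triangles e ->
  tri_sign R o2 ct2 T1 T2 =
    switching_sign T1 * tri_sign R o1 ct1 T1 T2 * switching_sign T2.
Proof.
move=> hT1 hT2.
have [adj | not_adj] := boolP ((T1 != T2) && (#|T1 :&: T2| == 2)%N); last first.
  by rewrite /tri_sign (negbTE not_adj) mulr0 mul0r.
have /andP [T12 /cards2P [a [b [ab hI]]]] := adj.
have /setIP [aT1 aT2] : a \in T1 :&: T2 by rewrite hI set21.
have /setIP [bT1 bT2] : b \in T1 :&: T2 by rewrite hI set22.
have [T1_3 _] := triangleP hT1; have [T2_3 _] := triangleP hT2.
rewrite (tri_sign_shared_edge ho1 hct1 R hT1 hT2 T12 ab hI).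
rewrite (tri_sign_shared_edge ho2 hct2 R hT1 hT2 T12 ab hI) /switching_sign.
rewrite -(agree_onE (hct1 hT1) (hct2 hT1) T1_3 aT1 bT1 ab).
rewrite -(agree_onE (hct1 hT2) (hct2 hT2) T2_3 aT2 bT2 ab).
by case: (ct1 T1 a b); case: (ct2 T1 a b); case: (ct1 T2 a b); case: (ct2 T2 a b);
  rewrite /= ?(mulr1, mul1r, mulrNN).
Qed.

Definition switching_mx : 'M[R]_#|triangles e| :=
  diag_mx (\row_i switching_sign (enum_val i)).

Lemma switching_mx_involutive : switching_mx *m switching_mx = 1%:M.
Proof.
apply: diag_mx_involutive => i; rewrite mxE /switching_sign.
by case: ifP; rewrite ?mulrNN mulr1.
Qed.

Lemma tri_adj_switch :
  tri_adj e R o2 ct2 = switching_mx *m tri_adj e R o1 ct1 *m switching_mx.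
Proof.
apply/matrixP => i j; rewrite mul_mx_diag mul_diag_mx !mxE.
exact: tri_sign_switch (enum_valP i) (enum_valP j).
Qed.

End Switching.

Theorem corollary5p2 (R : numDomainType) (V : finType) (e : rel V)
  (e_sym : symmetric e) (e_irr : irreflexive e)
  (o1 o2 : rel V) (ct1 ct2 : {set V} -> rel V)
  (ho1 : edge_orientation e o1) (ho2 : edge_orientation e o2)
  (hct1 : triangle_orientation e ct1) (hct2 : triangle_orientation e ct2) :
  char_poly (tri_adj e R o1 ct1) = char_poly (tri_adj e R o2 ct2).
Proof.
rewrite (tri_adj_switch R ho1 ho2 hct1 hct2) char_poly_conj //.
exact: switching_mx_involutive.
Qed.
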